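(* Let $V: \mathbb{R}^n\times \mathbb{R}^{p, N_p} \to \mathbb{R}$ be a generalized discrete-time control Lyapunov function (g-dclf) of order $m$ for the system $x^{k+1}=f(x^k,u^k)$. Suppose that the terminal-feedback assumption below is satisfied and that the finite-horizon optimal control problem below with $x=x(k_0)$ is feasible. Then the flexible-step MPC scheme given below is recursively feasible, i.e. the optimal control problem remains feasible at every subsequent iteration of the scheme.
   Context: Consider the discrete-time control system $x^{k+1}=f(x^k,u^k)$, $k\in\mathbb{N}$, with $x^k\in X\subseteq\mathbb{R}^n$, $u^k\in U\subseteq\mathbb{R}^p$, $0\in\operatorname{int}X$, $0\in\operatorname{int}U$, $f:X\times U\to\mathbb{R}^n$ continuous and $f(0,0)=0$. For $x\in X$, $\mathbf{U}_{[0:q-1]}(x)$ denotes the set of control sequences $\mathbf{u}_{[0:q-1]}=[u_0,\dots,u_{q-1}]\in\mathbb{R}^{p,q}$ such that, with $x^0=x$, $u_j\in U$ and $x^{j+1}=f(x^j,u_j)\in X$ for $j=0,\dots,q-1$ (in the proof the terminal constraint $x^{N_p}\in X^{N_p}$ is added to $\mathbf{U}_{[0:N_p-1]}$). g-dclf of order $m$ ($m\ge1$, $q\in\mathbb{N}$): a continuous, positive definite $V:\mathbb{R}^n\times\mathbb{R}^{p,q}\to\mathbb{R}$ for which there is a continuous, radially unbounded, positive definite $\alpha$ with $V(x^0,\mathbf{u}_{[0:q-1]})\ge\alpha(x^0,\mathbf{u}_{[0:q-1]})$ for all $x^0$, $\mathbf{u}_{[0:q-1]}\in\mathbf{U}_{[0:q-1]}(x^0)$,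 and such that for every such pair there is $\boldsymbol{\nu}_{[0:q+m-1]}$ with $\boldsymbol{\nu}_{[l:q+l-1]}\in\mathbf{U}_{[0:q-1]}(x^l)$ for $l=0,\dots,m$ (where $x^l$ are the states generated from $x^0$ by $\boldsymbol\nu$) satisfying the average decrease condition (adc) $\frac{1}{m}\sum_{i=1}^m\sigma_iV(x^i,\boldsymbol{\nu}_{[i:q+i-1]})-V(x^0,\mathbf{u}_{[0:q-1]})\le-\alpha(x^0,\mathbf{u}_{[0:q-1]})$, with weights $\sigma_i\ge0$ and $\frac{\sigma_1+\dots+\sigma_m}{m}-1\ge0$. Optimal control problem (with $q\le N_p$, $1\le m\le N_p$, $N=\max\{q+m,N_p\}$): given current state $x$ and the previous control strategy $\mathbf{u}^{*-}_{[0:q-1]}$, minimize $\sum_{j=0}^{N_p-1}f_0(x^j,u^j)+\phi(x^{N_p})$ over $u^0,\dots,u^{N-1}$ subject to $x^{j+1}=f(x^j,u^j)$, $x^0=x$, $u^j\in U$, $x^j\in X$, $x^{N_p}\in X^{N_p}$, $[u^l,\dots,u^{l+q-1}]\in\mathbf{U}_{[0:q-1]}(x^l)$ for $l=0,\dots,m$, and the adc constraint $\frac1m\sum_{i=1}^m\sigma_iV(x^i,[u^i,\dots,u^{i+q-1}])-V(x^0,\mathbf{u}^{*-}_{[0:q-1]})\le-\alpha(x^0,\mathbf{u}^{*-}_{[0:q-1]})$. Here $f_0$ is positive definite, $\phi$ positive semi-definite, $0\in\operatorname{int}X^{N_p}$, $X^{N_p}\subseteq X$, and $V$ is a g-dclf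 of order $m$. Flexible-step MPC scheme: set $k=k_0$, choose arbitrary $\mathbf{u}^{*-}_{[0:q-1]}\in\mathbf{U}_{[0:q-1]}(x(k_0))$; measure $x(k)$; solve the optimal control problem with $x=x(k)$ to obtain $\mathbf{u}^*_{[0:N-1]}$ with predicted states $x^{*j}$; choose an index $1\le\ell_{decr}\le m$ with $V(x^{*\ell_{decr}},\mathbf{u}^*_{[\ell_{decr}:q+\ell_{decr}-1]})-V(x,\mathbf{u}^{*-}_{[0:q-1]})\le-\alpha(x,\mathbf{u}^{*-}_{[0:q-1]})$; implement $\mathbf{u}^*_{[0:\ell_{decr}-1]}$ and set $\mathbf{u}^{*-}_{[0:q-1]}:=\mathbf{u}^*_{[\ell_{decr}:q+\ell_{decr}-1]}$; set $k:=k+\ell_{decr}$ and repeat. Terminal-feedback assumption (with $q=N_p$): $V:\mathbb{R}^n\times\mathbb{R}^{p,N_p}\to\mathbb{R}$ is a g-dclf of order $m$, and for any $(x^0,\mathbf{u}_{[0:N_p-1]})\in X\times\mathbf{U}_{[0:N_p-1]}(x^0)$ there exists a feedback $\mathbf{c}:X^{N_p}\to\mathbb{R}^{p,m}$ such that for all $\tilde x\in X^{N_p}$: (1) $c_0(\tilde x),\dots,c_{m-1}(\tilde x)\in U$; (2) with $x^0=\tilde x$, $x^{j+1}=f(x^j,c_j(\tilde x))\in X^{N_p}$ for $j=0,\dots,m-1$; (3) the sequence $[\mathbf{u}_{[0:N_p-1]},\mathbf{c}(\tilde x)]$ steers $x^0$ to $x^m$ such that $\frac1m\big(\sigma_mV(x^m,[\mathbf{u}_{[m:N_p-1]},\mathbf{c}(\tilde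 x)])+\dots+\sigma_1V(x^1,[\mathbf{u}_{[1:N_p-1]},c_0(\tilde x)])\big)-V(x^0,\mathbf{u}_{[0:N_p-1]})\le-\alpha(x^0,\mathbf{u}_{[0:N_p-1]})$. *)

From HB Require Import structures.
From mathcomp Require Import all_boot all_order all_algebra.
From mathcomp Require Import all_classical all_reals all_analysis.
Unset Printing Implicit Defensive.
Import Order.TTheory GRing.Theory Num.Theory.
Import numFieldNormedType.Exports.
Local Open Scope classical_set_scope.
Local Open Scope ring_scope.

Section Defs.
Variables (R : realType) (n p : nat).

(* states are column vectors in R^n, controls column vectors in R^p;
   a control sequence of length q is a p x q matrix (column j = u_j).
   Infinite-index control sequences [nat -> 'cV_p] are used as a convenient
   carrier for finite sequences; only the relevant indices matter. *)
Definition state := 'cV[R]_n.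
Definition control := 'cV[R]_p.

Fixpoint traj (f : state -> control -> state) (x : state) (u : nat -> control)
    (j : nat) : state :=
  match j with
  | 0 => x
  | j'.+1 => f (traj f x u j') (u j')
  end.

(* the columns of a p x q matrix as a sequence (zero beyond index q-1) *)
Definition seqM (q : nat) (w : 'M[R]_(p, q)) (j : nat) : control :=
  match @insub nat (fun k => (k < q)%N) 'I_q j with
  | Some k => col k w
  | None => 0
  end.

Definition window (q : nat) (u : nat -> control) (l : nat) : 'M[R]_(p, q) :=
  \matrix_(i < p, j < q) u (l + j)%N i ord0.

Definition catseq (k : nat) (u c : nat -> control) (j : nat) : control :=
  if (j < k)%N then u j else c (j - k)%N.

(* membership of a control sequence (given as a nat-indexed sequence) in
   U_{[0:q-1]}(x), with terminal constraint x^q \in XT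
   (take XT = setT when there is no terminal constraint). *)
Definition adm (f : state -> control -> state) (X : set state) (U : set control)
    (XT : set state) (q : nat) (x : state) (u : nat -> control) : Prop :=
  (forall j, (j < q)%N -> U (u j) /\ X (traj f x u j.+1)) /\ XT (traj f x u q).

Definition admM f X U XT (q : nat) (x : state) (w : 'M[R]_(p, q)) : Prop :=
  adm f X U XT q x (seqM q w).

Definition pos_def_pair (q : nat) (P : state -> 'M[R]_(p, q) -> R) : Prop :=
  P 0 0 = 0 /\ forall x w, ~ (x = 0 /\ w = 0) -> 0 < P x w.

Definition radially_unbounded (q : nat) (P : state -> 'M[R]_(p, q) -> R) : Prop :=
  forall M : R, exists r : R, forall x w, r < Num.max `|x| `|w| -> M < P x w.

Definition cont_pair (q : nat) (P : state -> 'M[R]_(p, q) -> R) : Prop :=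
  continuous (fun z : 'cV[R]_n * 'M[R]_(p, q) => P z.1 z.2).

Definition weights_ok (m : nat) (sigma : nat -> R) : Prop :=
  (forall i, (1 <= i <= m)%N -> 0 <= sigma i) /\
  (\sum_(1 <= i < m.+1) sigma i) / m%:R - 1 >= 0.

Definition avgV (q m : nat) (V : state -> 'M[R]_(p, q) -> R) (sigma : nat -> R)
    (f : state -> control -> state) (x : state) (nu : nat -> control) : R :=
  (\sum_(1 <= i < m.+1) sigma i * V (traj f x nu i) (window q nu i)) / m%:R.

Definition gdclf (f : state -> control -> state) (X : set state) (U : set control)
    (XT : set state) (q m : nat) (V : state -> 'M[R]_(p, q) -> R)
    (alpha : state -> 'M[R]_(p, q) -> R) (sigma : nat -> R) : Prop :=
  [/\ (1 <= m)%N /\ weights_ok m sigma,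
      cont_pair q V /\ pos_def_pair q V,
      cont_pair q alpha /\ radially_unbounded q alpha /\ pos_def_pair q alpha,
      (forall x0 w, X x0 -> admM f X U XT q x0 w -> alpha x0 w <= V x0 w) &
      (forall x0 w, X x0 -> admM f X U XT q x0 w ->
         exists nu : nat -> control,
           (forall l, (l <= m)%N -> adm f X U XT q (traj f x0 nu l) (fun j => nu (l + j)%N)) /\
           avgV q m V sigma f x0 nu - V x0 w <= - alpha x0 w)].

(* feasible set of the optimal control problem, with q = Np and N = Np + m *)
Definition ocp_feasible (f : state -> control -> state) (X : set state) (U : set control)
    (XNp : set state) (Np m : nat) (V alpha : state -> 'M[R]_(p, Np) -> R)
    (sigma : nat -> R) (x : state) (uprev : 'M[R]_(p, Np)) (u : nat -> control) : Prop :=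
  [/\ forall j, (j < Np + m)%N -> U (u j),
      forall j, (j <= Np + m)%N -> X (traj f x u j),
      XNp (traj f x u Np),
      forall l, (l <= m)%N -> adm f X U XNp Np (traj f x u l) (fun j => u (l + j)%N) &
      avgV Np m V sigma f x u - V x uprev <= - alpha x uprev].

Definition ocp_cost (f : state -> control -> state) (f0 : state -> control -> R)
    (phi : state -> R) (Np : nat) (x : state) (u : nat -> control) : R :=
  \sum_(0 <= j < Np) f0 (traj f x u j) (u j) + phi (traj f x u Np).

Definition ocp_optimal f X U XNp Np m V alpha sigma f0 phi x uprev u : Prop :=
  ocp_feasible f X U XNp Np m V alpha sigma x uprev u /\
  forall v, ocp_feasible f X U XNp Np m V alpha sigma x uprev v ->
    ocp_cost f f0 phi Np x u <= ocp_cost f f0 phi Np x v.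

(* one iteration of the flexible-step MPC scheme:
   from (x(k), u*-) to (x(k + l_decr), u*-_new) *)
Definition mpc_step f X U XNp Np m V alpha sigma f0 phi
    (s s' : state * 'M[R]_(p, Np)) : Prop :=
  exists (ustar : nat -> control) (l : nat),
    [/\ ocp_optimal f X U XNp Np m V alpha sigma f0 phi s.1 s.2 ustar,
        (1 <= l <= m)%N,
        V (traj f s.1 ustar l) (window Np ustar l) - V s.1 s.2 <= - alpha s.1 s.2 &
        s' = (traj f s.1 ustar l, window Np ustar l)].

Definition terminal_feedback (f : state -> control -> state) (X : set state)
    (U : set control) (XNp : set state) (Np m : nat)
    (V alpha : state -> 'M[R]_(p, Np) -> R) (sigma : nat -> R) : Prop :=
  forall x0 (w : 'M[R]_(p, Np)), X x0 -> admM f X U XNp Np x0 w ->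
    exists c : state -> nat -> control, forall xt, XNp xt ->
      [/\ forall j, (j < m)%N -> U (c xt j),
          forall j, (j < m)%N -> XNp (traj f xt (c xt) j.+1) &
          avgV Np m V sigma f x0 (catseq Np (seqM Np w) (c xt)) - V x0 w <= - alpha x0 w].

End Defs.

Arguments traj {R n p} f x u j.
Arguments seqM {R p q} w j.
Arguments window {R p} q u l.
Arguments catseq {R p} k u c j.
Arguments adm {R n p} f X U XT q x u.
Arguments admM {R n p} f X U XT {q} x w.
Arguments pos_def_pair {R n p q} P.
Arguments radially_unbounded {R n p q} P.
Arguments cont_pair {R n p q} P.
Arguments weights_ok {R} m sigma.
Arguments avgV {R n p} q m V sigma f x nu.
Arguments gdclf {R n p} f X U XT q m V alpha sigma.
Arguments ocp_feasible {R n p} f X U XNp Np m V alpha sigma x uprev u.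
Arguments ocp_cost {R n p} f f0 phi Np x u.
Arguments ocp_optimal {R n p} f X U XNp Np m V alpha sigma f0 phi x uprev u.
Arguments mpc_step {R n p} f X U XNp Np m V alpha sigma f0 phi s s'.
Arguments terminal_feedback {R n p} f X U XNp Np m V alpha sigma.

From Stdlib Require Import Relations.
From HB Require Import structures.
From mathcomp Require Import all_boot all_order all_algebra.
From mathcomp Require Import all_classical all_reals all_analysis.
From mathcomp Require Import zify.
Import Order.TTheory GRing.Theory Num.Theory.
Import numFieldNormedType.Exports.
Local Open Scope classical_set_scope.
Local Open Scope ring_scope.

(* The scheme keeps the invariant "x(k) lies in X and u*- is admissible from
   x(k)": the stored tail u*_[l:l+Np-1] of an optimal solution is admissible
   from the new state x*^l because the optimal control problem imposes exactly
   this for every l <= m.  Conversely, from any such pair the terminal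
   feedback appended to u*- is feasible: it keeps the predicted states in
   X^{Np} for m further steps and the adc is part of the assumption.  No
   optimality or Lyapunov property is needed for feasibility itself. *)

Lemma clos_refl_trans_invariant {A : Type} {r : relation A} (P : A -> Prop) {a b} :
  (forall x y, r x y -> P y) -> P a -> clos_refl_trans A r a b -> P b.
Proof.
move=> rP Pa ab; elim: ab Pa => [x y /rP //|//|x y z _ IHxy _ IHyz Px].
exact/IHyz/IHxy.
Qed.

Section Trajectories.
Variables (R : realType) (n p : nat) (f : 'cV[R]_n -> 'cV[R]_p -> 'cV[R]_n).

Lemma eq_traj x (u v : nat -> 'cV[R]_p) k :
  (forall j, (j < k)%N -> u j = v j) -> traj f x u k = traj f x v k.
Proof.
elim: k => [//|k IHk] eq_uv /=.
by rewrite IHk ?eq_uv // => j lt_jk; apply: eq_uv; lia.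
Qed.

Lemma trajD x (u : nat -> 'cV[R]_p) l k :
  traj f x u (l + k) = traj f (traj f x u l) (fun j => u (l + j)%N) k.
Proof. by elim: k => [|k IHk]; rewrite ?addn0 // addnS /= IHk. Qed.

Lemma eq_adm X U XT q x (u v : nat -> 'cV[R]_p) :
  (forall j, (j < q)%N -> u j = v j) -> adm f X U XT q x u -> adm f X U XT q x v.
Proof.
move=> eq_uv [admu XTu]; have eq_traj_uv := eq_traj x.
split; last by rewrite -(eq_traj_uv u).
move=> j lt_jq; have [Uu Xu] := admu j lt_jq.
by rewrite -eq_uv // -(eq_traj_uv u) // => i lt_ij; apply: eq_uv; lia.
Qed.

Lemma catseq_lt k (a c : nat -> 'cV[R]_p) j :
  (j < k)%N -> catseq k a c j = a j.
Proof. by rewrite /catseq => ->. Qed.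

Lemma catseq_addn k (a c : nat -> 'cV[R]_p) j : catseq k a c (k + j) = c j.
Proof. by rewrite /catseq ifF ?addKn //; lia. Qed.

Lemma traj_catseq_le x k (a c : nat -> 'cV[R]_p) j :
  (j <= k)%N -> traj f x (catseq k a c) j = traj f x a j.
Proof. by move=> le_jk; apply: eq_traj => i lt_ij; rewrite catseq_lt //; lia. Qed.

Lemma traj_catseq_addn x k (a c : nat -> 'cV[R]_p) j :
  traj f x (catseq k a c) (k + j) = traj f (traj f x a k) c j.
Proof.
rewrite trajD traj_catseq_le //.
by apply: eq_traj => i _; rewrite catseq_addn.
Qed.

End Trajectories.

Lemma seqM_window (R : realType) (p q : nat) (u : nat -> 'cV[R]_p) l j :
  (j < q)%N -> seqM (window q u l) j = u (l + j)%N.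
Proof.
move=> lt_jq; rewrite /seqM; case: insubP => [k _ <-|]; last by rewrite lt_jq.
by apply/matrixP => i k'; rewrite !mxE (ord1 k').
Qed.

Section RecursiveFeasibility.
Variables (R : realType) (n p Np m : nat).
Variables (X : set 'cV[R]_n) (U : set 'cV[R]_p) (XNp : set 'cV[R]_n).
Variables (f : 'cV[R]_n -> 'cV[R]_p -> 'cV[R]_n).
Variables (V alpha : 'cV[R]_n -> 'M[R]_(p, Np) -> R) (sigma : nat -> R).

Hypothesis XNp_sub : XNp `<=` X.

Lemma ocp_feasible_catseq x (w : 'M[R]_(p, Np)) (c : nat -> 'cV[R]_p) :
  X x -> admM f X U XNp x w ->
  (forall j, (j < m)%N -> U (c j)) ->
  (forall j, (j < m)%N -> XNp (traj f (traj f x (seqM w) Np) c j.+1)) ->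
  avgV Np m V sigma f x (catseq Np (seqM w) c) - V x w <= - alpha x w ->
  ocp_feasible f X U XNp Np m V alpha sigma x w (catseq Np (seqM w) c).
Proof.
move=> Xx [admw XNpw] Uc XNpc adc; set u := catseq Np (seqM w) c.
have XNp_tail l : (l <= m)%N -> XNp (traj f x u (Np + l)).
  case: l => [_|l lt_lm]; first by rewrite addn0 traj_catseq_le.
  by rewrite traj_catseq_addn; apply: XNpc.
have Uu j : (j < Np + m)%N -> U (u j).
  move=> lt_j; rewrite /u /catseq; case: ifP => [/admw[] //|ge_j].
  by apply: Uc; lia.
have Xu j : (j <= Np + m)%N -> X (traj f x u j).
  move=> le_j; have [le_jNp|lt_Npj] := leqP j Np.
    by rewrite traj_catseq_le //; case: j le_j le_jNp => [//|j _ /admw[]].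
  rewrite -(subnKC (ltnW lt_Npj)) traj_catseq_addn.
  have -> : (j - Np = (j - Np).-1.+1)%N by lia.
  by apply/XNp_sub/XNpc; lia.
split => // [|l le_lm]; first by rewrite traj_catseq_le.
split; last by rewrite -trajD addnC; apply: XNp_tail.
by move=> j lt_j; rewrite -trajD; split; [apply: Uu | apply: Xu]; lia.
Qed.

Lemma ocp_feasible_of_adm x w :
  terminal_feedback f X U XNp Np m V alpha sigma ->
  X x -> admM f X U XNp x w ->
  exists u, ocp_feasible f X U XNp Np m V alpha sigma x w u.
Proof.
move=> tf Xx admw; have [c tfc] := tf x w Xx admw.
have [Uc XNpc adc] := tfc _ admw.2.
by exists (catseq Np (seqM w) (c (traj f x (seqM w) Np))); apply: ocp_feasible_catseq.
Qed.

Lemma mpc_step_adm f0 phi s s' :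
  mpc_step f X U XNp Np m V alpha sigma f0 phi s s' ->
  X s'.1 /\ admM f X U XNp s'.1 s'.2.
Proof.
move=> [u [l [[[_ Xu _ admu _] _] /andP[_ le_lm] _ ->]]] /=.
split; first by apply: Xu; lia.
apply: eq_adm (admu l le_lm) => j lt_j.
by rewrite seqM_window.
Qed.

End RecursiveFeasibility.

Theorem theorem2p11 (R : realType) (n p Np m : nat)
  (X : set 'cV[R]_n) (U : set 'cV[R]_p) (XNp : set 'cV[R]_n)
  (f : 'cV[R]_n -> 'cV[R]_p -> 'cV[R]_n)
  (f0 : 'cV[R]_n -> 'cV[R]_p -> R) (phi : 'cV[R]_n -> R)
  (V alpha : 'cV[R]_n -> 'M[R]_(p, Np) -> R) (sigma : nat -> R)
  (x_k0 : 'cV[R]_n) (uprev0 : 'M[R]_(p, Np)) :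
  interior X 0 -> interior U 0 ->
  {within [set z | X z.1 /\ U z.2], continuous (fun z => f z.1 z.2)} ->
  f 0 0 = 0 ->
  (f0 0 0 = 0 /\ forall x u, ~ (x = 0 /\ u = 0) -> 0 < f0 x u) ->
  (phi 0 = 0 /\ forall x, 0 <= phi x) ->
  interior XNp 0 -> XNp `<=` X ->
  (1 <= m <= Np)%N ->
  gdclf f X U XNp Np m V alpha sigma ->
  terminal_feedback f X U XNp Np m V alpha sigma ->
  X x_k0 -> admM f X U XNp x_k0 uprev0 ->
  (exists u, ocp_feasible f X U XNp Np m V alpha sigma x_k0 uprev0 u) ->
  forall s, clos_refl_trans _ (mpc_step f X U XNp Np m V alpha sigma f0 phi) (x_k0, uprev0) s ->
    exists u, ocp_feasible f X U XNp Np m V alpha sigma s.1 s.2 u.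
Proof.
move=> _ _ _ _ _ _ _ XNp_sub _ _ tf Xx0 adm0 _ s reach_s.
pose inv (z : 'cV[R]_n * 'M[R]_(p, Np)) := X z.1 /\ admM f X U XNp z.1 z.2.
have [Xs adms] : inv s.
  by apply: (clos_refl_trans_invariant inv) reach_s => // ??; apply: mpc_step_adm.
exact: ocp_feasible_of_adm.
Qed.
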